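(* Let $P$ be a basic program. (1) Every answer set by complement of $P$ is a minimal model of $P$. (2) If $P$ is naf-monotone, every answer set by reduct of $P$ is a minimal model of $P$. (3) Every answer set of $P$ (by complement or by reduct) supports each of its members; i.e., for every such answer set $M$ and every $a\in M$, $M$ supports $a$.
   Context: Fix a countable set $\mathcal{A}$ of atoms. A c-atom is $A=(A_d,A_c)$, $A_d\subseteq\mathcal{A}$, $A_c\subseteq 2^{A_d}$; $(\{p\},\{\{p\}\})$ is elementary; $\bot=(\mathcal{A},\emptyset)$; $A$ is monotone if $X\subseteq Y\subseteq A_d$, $X\in A_c$ imply $Y\in A_c$. Rule: $A\leftarrow A_1,\dots,A_k,\mathit{not}\,A_{k+1},\dots,\mathit{not}\,A_n$, $head(r)=A$, $pos(r)=\{A_1,..,A_k\}$, $neg(r)=\{A_{k+1},..,A_n\}$. Program = set of rules; positive if no naf-literals; basic if every head is elementary or $\bot$; naf-monotone if every c-atom in some $neg(r)$ is monotone. $S\models A$ iff $S\cap A_d\in A_c$; $S\models\mathit{not}\,A$ iff $S\cap A_d\notin A_c$; $S\models body(r)$ if it satisfies all body literals; a rule is satisfied if head satisfied or body not; model = satisfies all rules; minimal model = model with no proper subset a model. $S$ supports atom $a$ w.r.t. $P$ if some $r\in P$ and $X\in head(r)_c$ satisfy $S\models body(r)$, $X\subseteq S$, $a\in X$. Conditional satisfaction: $S\models_M A$ iff $S\models A$ and every $I$ with $S\cap A_d\subseteq I\subseteq M\cap A_d$ lies in $A_c$. For positive basic $P$: $T_P(S,M)=\{a\mid \exists r\in P,\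 head(r)=(\{a\},\{\{a\}\}),\ S\models_M B\ \forall B\in pos(r)\}$, $T^0_P(\emptyset,M)=\emptyset$, $T^{i+1}_P(\emptyset,M)=T_P(T^i_P(\emptyset,M),M)$, $T^\infty_P(\emptyset,M)=\bigcup_i T^i_P(\emptyset,M)$; a model $M$ is an answer set iff $M=T^\infty_P(\emptyset,M)$. Complement $\bar A=(A_d,2^{A_d}\setminus A_c)$; $\mathcal{C}(P)$ replaces each $\mathit{not}\,A$ by $\bar A$; answer set by complement = answer set of $\mathcal{C}(P)$. Reduct $P^M$: delete rules with some $\mathit{not}\,A$ in the body where $M\models A$, then delete remaining naf-literals; answer set by reduct = answer set of $P^M$. *)

From Stdlib Require Import List.
Import ListNotations.
Set Implicit Arguments.

Section Defs.
Variable Atom : Type.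

Definition aset := Atom -> Prop.
Definition subset (X Y : aset) : Prop := forall x, X x -> Y x.

Record catom := CAtom { dom : aset; cond : aset -> Prop }.

Definition wf_catom (A : catom) : Prop :=
  forall X, cond A X -> subset X (dom A).

Definition elem (p : Atom) : catom :=
  CAtom (fun x => x = p) (fun X => X = (fun x => x = p)).
Definition bot : catom := CAtom (fun _ => True) (fun _ => False).

Definition monotone (A : catom) : Prop :=
  forall X Y, subset X Y -> subset Y (dom A) -> cond A X -> cond A Y.

Record rule := Rule { head : catom; pos : list catom; neg : list catom }.
Definition program := rule -> Prop.

Definition rule_catoms (r : rule) : list catom := head r :: pos r ++ neg r.
Definition wf_program (P : program) : Prop :=
  forall r, P r -> forall A, In A (rule_catoms r) -> wf_catom A.

Definition positive (P : program) : Prop := forall r, P r -> neg r = [].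
Definition basic (P : program) : Prop :=
  forall r, P r -> (exists p, head r = elem p) \/ head r = bot.
Definition naf_monotone (P : program) : Prop :=
  forall r, P r -> forall A, In A (neg r) -> monotone A.

Definition sat (S : aset) (A : catom) : Prop :=
  cond A (fun x => S x /\ dom A x).
Definition sat_body (S : aset) (r : rule) : Prop :=
  (forall A, In A (pos r) -> sat S A) /\ (forall A, In A (neg r) -> ~ sat S A).
Definition sat_rule (S : aset) (r : rule) : Prop :=
  sat_body S r -> sat S (head r).
Definition model (P : program) (S : aset) : Prop :=
  forall r, P r -> sat_rule S r.
Definition minimal_model (P : program) (M : aset) : Prop :=
  model P M /\
  forall N, subset N M -> (exists x, M x /\ ~ N x) -> ~ model P N.

Definition supports (P : program) (S : aset) (a : Atom) : Prop :=
  exists r X, P r /\ cond (head r) X /\ sat_body S r /\ subset X S /\ X a.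

Definition csat (S M : aset) (A : catom) : Prop :=
  sat S A /\
  forall I, subset (fun x => S x /\ dom A x) I ->
            subset I (fun x => M x /\ dom A x) -> cond A I.

Definition TP (P : program) (S M : aset) : aset :=
  fun a => exists r, P r /\ head r = elem a /\ forall B, In B (pos r) -> csat S M B.

Fixpoint Titer (P : program) (M : aset) (n : nat) : aset :=
  match n with
  | O => fun _ => False
  | S k => TP P (Titer P M k) M
  end.

Definition Tinf (P : program) (M : aset) : aset :=
  fun a => exists n, Titer P M n a.

Definition answer_set_pos (P : program) (M : aset) : Prop :=
  model P M /\ forall a, M a <-> Tinf P M a.

Definition compl (A : catom) : catom :=
  CAtom (dom A) (fun X => subset X (dom A) /\ ~ cond A X).

Definition CP (P : program) : program :=
  fun r' => exists r, P r /\ r' = Rule (head r) (pos r ++ map compl (neg r)) [].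

Definition reduct (P : program) (M : aset) : program :=
  fun r' => exists r, P r /\ (forall A, In A (neg r) -> ~ sat M A) /\
                      r' = Rule (head r) (pos r) [].

Definition answer_set_compl (P : program) (M : aset) : Prop :=
  answer_set_pos (CP P) M.
Definition answer_set_reduct (P : program) (M : aset) : Prop :=
  answer_set_pos (reduct P M) M.

End Defs.

From Pilot Require Import Defs.
From Stdlib Require Import List.
Import ListNotations.
Set Implicit Arguments.

(* Say that a rule r of P "fires" for a set N and an atom a
   when head(r) is the elementary c-atom of a and N satisfies body(r).

   Let M be an answer set of a positive basic program Q (later C(P) or P^M),
   so M is the union of the stages T^k = T^k_Q(emptyset, M), all inside M.
   (a) Minimality: if every atom derived at stage k+1 fires for EVERY N with
       T^k <= N <= M, then each model N <= M of P contains every stage, by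
       induction on k, hence N = M.
   (b) Support: if every atom derived at stage k+1 fires at M, then M supports
       each of its members.
   Conditional satisfaction S |=_M B gives N |= B for every N between S and M,
   which yields the firing hypotheses: for C(P) directly (the complemented
   negative literals are conditionally satisfied too), for P^M at N = M
   always, and for arbitrary N in between when the negated c-atoms are
   monotone.  The theorem then follows by combining these pieces. *)

Section AnswerSets.
Variable Atom : Type.
Implicit Types (P Q : program Atom) (S M N : aset Atom) (A B : catom Atom).

Definition fires P N (a : Atom) : Prop :=
  exists r, P r /\ Defs.head r = elem a /\ sat_body N r.

Lemma csat_sat S N M B :
  csat S M B -> subset S N -> subset N M -> sat N B.
Proof.
  intros [_ Hall] HSN HNM. apply Hall.
  - intros x [Sx Dx]; split; auto.
  - intros x [Nx Dx]; split; auto.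
Qed.

Lemma sat_elem N (a : Atom) : sat N (elem a) -> N a.
Proof.
  unfold sat; simpl. intro Heq.
  pose proof (f_equal (fun X => X a) Heq) as Ha; simpl in Ha.
  assert (Haa : a = a) by reflexivity.
  rewrite <- Ha in Haa. exact (proj1 Haa).
Qed.

Lemma sat_compl_iff N A : sat N (compl A) <-> ~ sat N A.
Proof.
  unfold sat; simpl. split; [tauto|].
  intro Hn; split; [intros x [_ Dx]; exact Dx | exact Hn].
Qed.

Lemma monotone_unsat_sub N M A :
  monotone A -> subset N M -> ~ sat M A -> ~ sat N A.
Proof.
  intros Hmon HNM HM HN. apply HM.
  apply (Hmon (fun x => N x /\ dom A x)); auto.
  - intros x [Nx Dx]; split; auto.
  - intros x [_ Dx]; exact Dx.
Qed.

Lemma fires_model P N a : model P N -> fires P N a -> N a.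
Proof.
  intros Hmod [r [Hr [Hhead Hbody]]].
  apply sat_elem. rewrite <- Hhead. exact (Hmod r Hr Hbody).
Qed.

Lemma fires_supports P M a : fires P M a -> M a -> supports P M a.
Proof.
  intros [r [Hr [Hhead Hbody]]] Ma.
  exists r, (fun x => x = a). split; [exact Hr|split; [|split; [exact Hbody|]]].
  - rewrite Hhead. reflexivity.
  - split; [intros x ->; exact Ma | reflexivity].
Qed.

Lemma Titer_sub Q M n : answer_set_pos Q M -> subset (Titer Q M n) M.
Proof. intros [_ Heq] x Hx. apply Heq. exists n. exact Hx. Qed.

Lemma answer_set_minimal Q P M :
  answer_set_pos Q M -> model P M ->
  (forall S N a, subset S M -> TP Q S M a -> subset S N -> subset N M ->
                 fires P N a) ->
  minimal_model P M.
Proof.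
  intros Hans HmodM Hfire. split; [exact HmodM|].
  intros N HNM [x [Mx Nx]] HmodN. apply Nx.
  assert (Hstages : forall n, subset (Titer Q M n) N).
  { induction n as [|k IH]; intros y Hy; [destruct Hy|].
    apply (fires_model HmodN).
    exact (Hfire _ _ _ (Titer_sub k Hans) Hy IH HNM). }
  destruct (proj1 (proj2 Hans x) Mx) as [n Hn]. exact (Hstages n x Hn).
Qed.

Lemma answer_set_supported Q P M :
  answer_set_pos Q M ->
  (forall S a, subset S M -> TP Q S M a -> fires P M a) ->
  forall a, M a -> supports P M a.
Proof.
  intros Hans Hfire a Ma. apply fires_supports; [|exact Ma].
  destruct (proj1 (proj2 Hans a) Ma) as [[|k] Hk]; [destruct Hk|].
  exact (Hfire _ _ (Titer_sub k Hans) Hk).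
Qed.

Lemma CP_model P M : model (CP P) M -> model P M.
Proof.
  intros Hmod r Hr [Hpos Hneg].
  apply (Hmod (Rule (Defs.head r) (pos r ++ map (@compl Atom) (neg r)) [])).
  - exists r; split; [exact Hr | reflexivity].
  - split; simpl; [|intros A []].
    intros A HA. apply in_app_or in HA as [HA|HA]; [auto|].
    apply in_map_iff in HA as [A' [<- HA']].
    apply (proj2 (sat_compl_iff _ _)). auto.
Qed.

Lemma CP_step_fires P S N M a :
  TP (CP P) S M a -> subset S N -> subset N M -> fires P N a.
Proof.
  intros [r' [[r [Hr ->]] [Hhead Hcsat]]] HSN HNM; simpl in Hhead, Hcsat.
  exists r. repeat split; auto.
  - intros B HB. apply (csat_sat (S := S) (M := M)); auto.
    apply Hcsat, in_or_app; auto.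
  - intros A HA. apply (proj1 (sat_compl_iff _ _)).
    apply (csat_sat (S := S) (M := M)); auto.
    apply Hcsat, in_or_app; right. apply in_map. exact HA.
Qed.

Lemma reduct_model P M : model (reduct P M) M -> model P M.
Proof.
  intros Hmod r Hr [Hpos Hneg].
  apply (Hmod (Rule (Defs.head r) (pos r) [])).
  - exists r; split; [exact Hr | split; [exact Hneg | reflexivity]].
  - split; simpl; [exact Hpos | intros A []].
Qed.

(* A derivation step of P^M fires in P for every set N between S and M whose
   negative literals hold; this is automatic at N = M and, for a
   naf-monotone P, at every N below M. *)
Lemma reduct_step_fires P S N M a :
  TP (reduct P M) S M a -> subset S N -> subset N M ->
  (forall r A, P r -> In A (neg r) -> ~ sat M A -> ~ sat N A) ->
  fires P N a.
Proof.
  intros [r' [[r [Hr [Hneg ->]]] [Hhead Hcsat]]] HSN HNM Hdown;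
    simpl in Hhead, Hcsat.
  exists r. repeat split; auto.
  - intros B HB. exact (csat_sat (Hcsat B HB) HSN HNM).
  - intros A HA. exact (Hdown r A Hr HA (Hneg A HA)).
Qed.

End AnswerSets.

Theorem proposition4 (Atom : Type)
  (Atom_countable : exists f : Atom -> nat, forall x y, f x = f y -> x = y)
  (P : program Atom) (HwfP : wf_program P) (HbP : basic P) :
  (forall M : aset Atom, answer_set_compl P M -> minimal_model P M) /\
  (naf_monotone P -> forall M : aset Atom, answer_set_reduct P M -> minimal_model P M) /\
  (forall M : aset Atom, (answer_set_compl P M \/ answer_set_reduct P M) ->
     forall a, M a -> supports P M a).
Proof.
  split; [|split].
  - intros M Hans.
    apply (answer_set_minimal Hans (CP_model (proj1 Hans))).
    intros S N a _ Hstep. exact (CP_step_fires Hstep).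
  - intros Hnaf M Hans.
    apply (answer_set_minimal Hans (reduct_model (proj1 Hans))).
    intros S N a _ Hstep HSN HNM.
    apply (reduct_step_fires Hstep HSN HNM).
    intros r A Hr HA. exact (monotone_unsat_sub (Hnaf r Hr A HA) HNM).
  - intros M [Hans|Hans].
    + apply (answer_set_supported Hans).
      intros S a HSM Hstep. exact (CP_step_fires Hstep HSM (fun x Hx => Hx)).
    + apply (answer_set_supported Hans).
      intros S a HSM Hstep.
      exact (reduct_step_fires Hstep HSM (fun x Hx => Hx) (fun _ _ _ _ H => H)).
Qed.
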